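(* For any $\Delta>0$ there exist a linear mixture MDP structure (feature map and reward) and parameters $\theta^*,\theta^{\mathrm{off},*}$ with $\|\theta^*-\theta^{\mathrm{off},*}\|_2=\Delta$ such that $\sup_\pi|V^\pi_1(s_1)-V^{\mathrm{off},\pi}_1(s_1)|=\Omega(\Delta)$.
   Context: Offline and online linear mixture MDPs share state space, action space, horizon, reward and feature map $\phi$ (with $\sum_{s'}|\phi_j(s'\mid s,a)|\le1$), and have transitions $P(s'\mid s,a)=\langle\theta^*,\phi(s'\mid s,a)\rangle$ and $P^{\mathrm{off}}(s'\mid s,a)=\langle\theta^{\mathrm{off},*},\phi(s'\mid s,a)\rangle$. $V^\pi_1$ and $V^{\mathrm{off},\pi}_1$ are the value functions at stage 1 of policy $\pi$ under $P$ and $P^{\mathrm{off}}$, evaluated at the initial state $s_1$; the supremum is over policies. *)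

From HB Require Import structures.
From mathcomp Require Import all_boot all_order all_algebra.
From mathcomp Require Import boolp classical_sets reals.
Set Implicit Arguments. Unset Strict Implicit. Unset Printing Implicit Defensive.
Import Order.TTheory GRing.Theory Num.Theory.
Local Open Scope ring_scope.

Section LinearMixture.
Variable R : realType.
Variables (nS nA d : nat).
Notation S := 'I_nS.
Notation A := 'I_nA.

(* feature map: phi s' s a j = phi_j(s' | s, a) *)
Definition feature_ok (phi : S -> S -> A -> 'I_d -> R) : Prop :=
  forall (s : S) (a : A) (j : 'I_d), \sum_(s' : S) `|phi s' s a j| <= 1.

Definition mixP (theta : 'I_d -> R) (phi : S -> S -> A -> 'I_d -> R)
  (s' s : S) (a : A) : R := \sum_(j < d) theta j * phi s' s a j.

Definition valid_param (theta : 'I_d -> R) (phi : S -> S -> A -> 'I_d -> R) : Prop :=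
  forall (s : S) (a : A),
    (forall s' : S, 0 <= mixP theta phi s' s a) /\
    \sum_(s' : S) mixP theta phi s' s a = 1.

Definition norm2 (v : 'I_d -> R) : R := Num.sqrt (\sum_(j < d) v j ^+ 2).

(* rewards r h s a in [0,1], stages h = 0, ..., H-1 (stage h+1 of the paper) *)
Definition reward_ok (H : nat) (r : nat -> S -> A -> R) : Prop :=
  forall h s a, (h < H)%N -> 0 <= r h s a <= 1.

(* (Markov, possibly randomized) policy: pi h s a = pi_{h+1}(a | s) *)
Definition is_policy (H : nat) (pi : nat -> S -> A -> R) : Prop :=
  forall h s, (h < H)%N ->
    (forall a, 0 <= pi h s a) /\ \sum_(a : A) pi h s a = 1.

(* value with n stages remaining (current stage index H - n) *)
Fixpoint valn (P : S -> S -> A -> R) (r : nat -> S -> A -> R)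
    (pi : nat -> S -> A -> R) (H n : nat) (s : S) : R :=
  match n with
  | 0 => 0
  | n'.+1 =>
      \sum_(a : A) pi (H - n)%N s a *
        (r (H - n)%N s a + \sum_(s' : S) P s' s a * valn P r pi H n' s')
  end.

Definition V1 (P : S -> S -> A -> R) (r : nat -> S -> A -> R)
    (pi : nat -> S -> A -> R) (H : nat) (s : S) : R := valn P r pi H H s.

Definition sup_value_gap (phi : S -> S -> A -> 'I_d -> R) (r : nat -> S -> A -> R)
    (H : nat) (s1 : S) (theta theta_off : 'I_d -> R) : R :=
  sup [set x : R | exists pi, is_policy H pi /\
     x = `|V1 (mixP theta phi) r pi H s1 - V1 (mixP theta_off phi) r pi H s1| ].

End LinearMixture.

(** Two states and one action.  The first coordinate of the feature sends every
    state to the rewarding state [ord0]; the second leaks probability [beta] from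
    [ord0] to the zero-reward state [ord_max].  Under [theta = (1, 0)] the chain
    never leaves [ord0]; under [theta_off = (1, Delta)] it leaks [beta * Delta]
    per step, whatever the state, so each of the [K] remaining steps loses
    [beta * Delta] of value.  Taking [K > Delta] and [beta = 1 / (2 K)] keeps the
    features admissible and the leak a probability, and the total loss is
    [K * beta * Delta = Delta / 2] for every policy. *)
From HB Require Import structures.
From mathcomp Require Import all_boot all_order all_algebra.
From mathcomp Require Import boolp classical_sets reals.
From mathcomp Require Import ring lra.
Set Implicit Arguments. Unset Strict Implicit. Unset Printing Implicit Defensive.
Import Order.TTheory GRing.Theory Num.Theory.
Local Open Scope ring_scope.

Section Policies.
Variables (R : realType) (nS nA : nat).

Lemma policy_avg_const (H : nat) (pi : nat -> 'I_nS -> 'I_nA -> R) h s (c : R) :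
  is_policy H pi -> (h < H)%N -> \sum_(a : 'I_nA) pi h s a * c = c.
Proof. by move=> Hpi hH; rewrite -big_distrl /= (proj2 (Hpi h s hH)) mul1r. Qed.

Lemma is_policy_uniform (H : nat) :
  (0 < nA)%N -> is_policy H (fun (h : nat) (s : 'I_nS) (a : 'I_nA) => (nA%:R)^-1 : R).
Proof.
move=> nA_gt0 h s _; split=> [a|]; first by rewrite invr_ge0 ler0n.
by rewrite sumr_const card_ord -[_ *+ nA]mulr_natr mulVf // pnatr_eq0 -lt0n.
Qed.

Lemma sup_value_gap_const (d H : nat) (s1 : 'I_nS)
    (phi : 'I_nS -> 'I_nS -> 'I_nA -> 'I_d -> R) (r : nat -> 'I_nS -> 'I_nA -> R)
    (theta theta_off : 'I_d -> R) (g : R) :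
  (0 < nA)%N ->
  (forall pi, is_policy H pi ->
     `|V1 (mixP theta phi) r pi H s1 - V1 (mixP theta_off phi) r pi H s1| = g) ->
  sup_value_gap phi r H s1 theta theta_off = g.
Proof.
move=> nA_gt0 gap_g; rewrite /sup_value_gap.
suff -> : [set x : R | exists pi, is_policy H pi /\
   x = `|V1 (mixP theta phi) r pi H s1 - V1 (mixP theta_off phi) r pi H s1|]%classic
   = [set g]%classic by rewrite sup1.
apply/seteqP; split=> x /=; first by move=> [pi [Hpi ->]]; exact: gap_g.
move=> ->; exists (fun (h : nat) (s : 'I_nS) (a : 'I_nA) => (nA%:R)^-1); split; first exact: is_policy_uniform.
by rewrite gap_g //; exact: is_policy_uniform.
Qed.

End Policies.

Section ConstKernel.
Variables (R : realType) (nS nA : nat) (p rho : 'I_nS -> R).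
Hypothesis p_sum1 : \sum_(s : 'I_nS) p s = 1.

Let P (s' s : 'I_nS) (a : 'I_nA) : R := p s'.
Let r (h : nat) (s : 'I_nS) (a : 'I_nA) : R := rho s.

Lemma valnS_const_kernel pi H n s :
  is_policy H pi -> (n < H)%N ->
  valn P r pi H n.+1 s = rho s + \sum_(s' : 'I_nS) p s' * valn P r pi H n s'.
Proof.
move=> Hpi nH; rewrite /= {1}/r {1}/P (policy_avg_const _ _ Hpi) //.
by rewrite ltn_subrL (leq_ltn_trans (leq0n n) nH).
Qed.

Lemma valn_const_kernel pi H n s :
  is_policy H pi -> (n < H)%N ->
  valn P r pi H n.+1 s = rho s + n%:R * \sum_(s' : 'I_nS) p s' * rho s'.
Proof.
move=> Hpi; elim: n s => [|n IH] s nH.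
  by rewrite valnS_const_kernel //= big1 ?mul0r // => s' _; rewrite mulr0.
rewrite valnS_const_kernel //; congr (_ + _).
under eq_bigr => s' _ do rewrite IH ?(ltnW nH) // mulrDr.
by rewrite big_split /= -big_distrl /= p_sum1 -natr1; ring.
Qed.

Lemma V1_const_kernel pi K s :
  is_policy K.+1 pi ->
  V1 P r pi K.+1 s = rho s + K%:R * \sum_(s' : 'I_nS) p s' * rho s'.
Proof. by move=> Hpi; exact: valn_const_kernel. Qed.

End ConstKernel.

Section LeakyChain.
Variables (R : realType) (beta : R).

Lemma sum_I2 (F : 'I_2 -> R) : \sum_(i < 2) F i = F ord0 + F ord_max.
Proof. by rewrite big_ord_recl big_ord1; congr (_ + F _); exact: val_inj. Qed.

Definition leak_feature (s' s : 'I_2) (a : 'I_1) (j : 'I_2) : R :=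
  if j == ord0 then (s' == ord0)%:R else if s' == ord0 then - beta else beta.

Definition leak_param (t : R) (j : 'I_2) : R := if j == ord0 then 1 else t.

Definition leak_kernel (q : R) (s' : 'I_2) : R := if s' == ord0 then 1 - q else q.

Definition leak_reward (h : nat) (s : 'I_2) (a : 'I_1) : R := (s == ord0)%:R.

Lemma reward_ok_leak H : reward_ok H leak_reward.
Proof. by move=> h s a _; rewrite /leak_reward; case: (s == ord0) => /=; lra. Qed.

Lemma mixP_leak t :
  mixP (leak_param t) leak_feature = fun s' _ _ => leak_kernel (t * beta) s'.
Proof.
apply/funext=> s'; apply/funext=> s; apply/funext=> a.
rewrite /mixP sum_I2 /leak_param /leak_feature /leak_kernel /=.
by case: (s' == ord0) => /=; ring.
Qed.

Lemma sum_leak_kernel q : \sum_(s : 'I_2) leak_kernel q s = 1.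
Proof. by rewrite sum_I2 /leak_kernel /=; ring. Qed.

Lemma expected_leak_reward q :
  \sum_(s : 'I_2) leak_kernel q s * (s == ord0)%:R = 1 - q.
Proof. by rewrite sum_I2 /leak_kernel /=; ring. Qed.

Lemma feature_ok_leak : 0 <= beta -> beta <= 1 / 2 -> feature_ok leak_feature.
Proof.
move=> beta_ge0 beta_le s a j; rewrite sum_I2 /leak_feature /=.
case: (j == ord0); rewrite ?normr1 ?normr0 ?normrN ?ger0_norm //; lra.
Qed.

Lemma valid_param_leak t :
  0 <= t * beta <= 1 -> valid_param (leak_param t) leak_feature.
Proof.
move=> /andP[q_ge0 q_le1] s a; rewrite mixP_leak sum_leak_kernel; split=> // s'.
by rewrite /leak_kernel; case: (s' == ord0); lra.
Qed.

Lemma norm2_leak_param t t' :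
  norm2 (fun j => leak_param t j - leak_param t' j) = `|t - t'|.
Proof. by rewrite /norm2 sum_I2 /leak_param /= subrr expr0n add0r sqrtr_sqr. Qed.

Lemma value_gap_leak pi K t :
  is_policy K.+1 pi ->
  V1 (mixP (leak_param 0) leak_feature) leak_reward pi K.+1 ord0
  - V1 (mixP (leak_param t) leak_feature) leak_reward pi K.+1 ord0
  = K%:R * (t * beta).
Proof.
move=> Hpi; rewrite !mixP_leak.
rewrite !(V1_const_kernel (fun s => (s == ord0)%:R) (sum_leak_kernel _)) //.
by rewrite !expected_leak_reward; ring.
Qed.

End LeakyChain.

Theorem propositionB2 (R : realType) :
  exists c : R, 0 < c /\
  forall Delta : R, 0 < Delta ->
  exists (nS nA d H : nat) (s1 : 'I_nS) (phi : 'I_nS -> 'I_nS -> 'I_nA -> 'I_d -> R)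
         (r : nat -> 'I_nS -> 'I_nA -> R) (theta theta_off : 'I_d -> R),
    (0 < nA)%N /\ feature_ok phi /\ reward_ok H r /\
    valid_param theta phi /\ valid_param theta_off phi /\
    norm2 (fun j => theta j - theta_off j) = Delta /\
    sup_value_gap phi r H s1 theta theta_off >= c * Delta.
Proof.
exists (1 / 2); split=> [|D D_gt0]; first lra.
set K := Num.bound D; have D_lt_K : D < K%:R := archi_boundP (ltW D_gt0).
have K_ge1 : 1 <= K%:R :> R by rewrite ler1n -(ltr0n R) (lt_trans D_gt0).
set beta : R := (2 * K%:R)^-1.
have Kbeta : K%:R * beta = 1 / 2 by rewrite /beta; field; lra.
have beta_gt0 : 0 < beta by rewrite invr_gt0; lra.
have beta_le : beta <= 1 / 2.
  by rewrite -Kbeta -{1}[beta]mul1r (ler_wpM2r (ltW beta_gt0) K_ge1).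
have leak_le : D * beta <= 1.
  by move: (ler_wpM2r (ltW beta_gt0) (ltW D_lt_K)) => /=; rewrite Kbeta; lra.
exists 2%N, 1%N, 2%N, K.+1, ord0, (leak_feature beta), (@leak_reward R),
  (leak_param 0), (leak_param D).
split=> //; split; first exact: feature_ok_leak (ltW beta_gt0) beta_le.
split; first exact: reward_ok_leak.
split; first by apply: valid_param_leak; rewrite mul0r lexx ler01.
split; first by apply: valid_param_leak; rewrite leak_le mulr_ge0 ?ltW.
split; first by rewrite norm2_leak_param sub0r normrN gtr0_norm.
rewrite (sup_value_gap_const (g := D / 2)) //; first lra.
by move=> pi Hpi; rewrite value_gap_leak // mulrCA Kbeta ger0_norm; lra.
Qed.
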